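(* Under Assumptions 1 and 2 (stated in the context), the boundary $\partial\mathcal{K}_\beta:=\operatorname{cl}(\mathcal{K}_\beta)\setminus\mathcal{K}_\beta$ satisfies $\partial\mathcal{K}_\beta\subseteq\{K\in\mathcal{K}:\|\mathbf{T}_\infty(K)\|_{\mathcal{H}_\infty}=\beta\}$.
   Context: Let $A\in\mathbb{R}^{n\times n}$, $B\in\mathbb{R}^{n\times m}$, $B_w\in\mathbb{R}^{n\times n}$, $W:=B_wB_w^{\mathsf T}$. Let $Q_2\succeq0$, $R_2\succ0$, $Q_\infty\succ0$, $R_\infty\succ0$ be symmetric weight matrices and $\beta>0$. For $K\in\mathbb{R}^{m\times n}$ write $A_K:=A+BK$. Let $\mathcal{K}:=\{K: A_K \text{ Hurwitz}\}$. For $K\in\mathcal{K}$ let $\mathbf{T}_\infty(K)(s)=\begin{bmatrix}Q_\infty^{1/2}\\ R_\infty^{1/2}K\end{bmatrix}(sI-A_K)^{-1}B_w$ and $\|\cdot\|_{\mathcal{H}_\infty}$ the $\mathcal{H}_\infty$ norm. $\mathcal{K}_\beta:=\{K\in\mathcal{K}:\|\mathbf{T}_\infty(K)\|_{\mathcal{H}_\infty}<\beta\}$. Assumption 1: $(A,B)$ stabilizable, $(Q_2^{1/2},A)$ detectable, and $\beta>\beta^\ast:=\inf_{K\in\mathcal{K}}\|\mathbf{T}_\infty(K)\|_{\mathcal{H}_\infty}$. Assumption 2: $Q_2\succeq0$ and $W,Q_\infty,R_2,R_\infty$ positive definite. *)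

From HB Require Import structures.
From mathcomp Require Import all_boot all_order all_algebra.
From mathcomp Require Import complex.
From mathcomp Require Import all_classical all_reals all_analysis.
Set Implicit Arguments. Unset Strict Implicit. Unset Printing Implicit Defensive.
Import Order.TTheory GRing.Theory Num.Theory numFieldTopology.Exports.
Local Open Scope ring_scope.
Local Open Scope classical_set_scope.

Section Defs.
Variable R : realType.
Local Notation C := (complex R).

Definition cmx (p q : nat) (M : 'M[R]_(p, q)) : 'M[C]_(p, q) :=
  map_mx (fun x => (x%:C)%C) M.

Definition hurwitz (n : nat) (M : 'M[R]_n) : Prop :=
  forall l : C, eigenvalue (cmx M) l -> complex.Re l < 0.

Definition psd (n : nat) (M : 'M[R]_n) : Prop :=
  M^T = M /\ forall x : 'cV[R]_n, 0 <= (x^T *m M *m x) 0 0.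
Definition pd (n : nat) (M : 'M[R]_n) : Prop :=
  M^T = M /\ forall x : 'cV[R]_n, x != 0 -> 0 < (x^T *m M *m x) 0 0.

Definition is_sqrtm (n : nat) (S M : 'M[R]_n) : Prop :=
  psd S /\ S *m S = M.

Definition stabilizable (n m : nat) (A : 'M[R]_n) (B : 'M[R]_(n, m)) : Prop :=
  exists K : 'M[R]_(m, n), hurwitz (A + B *m K).
Definition detectable (n p : nat) (Cm : 'M[R]_(p, n)) (A : 'M[R]_n) : Prop :=
  exists L : 'M[R]_(n, p), hurwitz (A + L *m Cm).

Definition vnorm (q : nat) (v : 'cV[C]_q) : R :=
  Num.sqrt (\sum_(i < q) (complex.Re (v i 0) ^+ 2 + complex.Im (v i 0) ^+ 2)).

Definition opnorm (p q : nat) (M : 'M[C]_(p, q)) : \bar R :=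
  ereal_sup [set (vnorm (M *m v))%:E | v in [set v : 'cV[C]_q | vnorm v = 1]].

Definition Tinf (n m : nat) (A : 'M[R]_n) (B : 'M[R]_(n, m)) (Bw : 'M[R]_n)
  (Qh : 'M[R]_n) (Rh : 'M[R]_m) (K : 'M[R]_(m, n)) (w : R) : 'M[C]_(n + m, n) :=
  cmx (col_mx Qh (Rh *m K)) *m
  invmx ((Complex 0 w)%:M - cmx (A + B *m K)) *m cmx Bw.

Definition hinf_norm (n m : nat) (A : 'M[R]_n) (B : 'M[R]_(n, m)) (Bw : 'M[R]_n)
  (Qh : 'M[R]_n) (Rh : 'M[R]_m) (K : 'M[R]_(m, n)) : \bar R :=
  ereal_sup [set opnorm (Tinf A B Bw Qh Rh K w) | w in [set: R]].

Definition Kstab (n m : nat) (A : 'M[R]_n) (B : 'M[R]_(n, m)) : set 'M[R]_(m, n) :=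
  [set K | hurwitz (A + B *m K)].

Definition Kbeta (n m : nat) (A : 'M[R]_n) (B : 'M[R]_(n, m)) (Bw : 'M[R]_n)
  (Qh : 'M[R]_n) (Rh : 'M[R]_m) (beta : R) : set 'M[R]_(m, n) :=
  [set K | Kstab A B K /\ (hinf_norm A B Bw Qh Rh K < beta%:E)%E].

Definition beta_star (n m : nat) (A : 'M[R]_n) (B : 'M[R]_(n, m)) (Bw : 'M[R]_n)
  (Qh : 'M[R]_n) (Rh : 'M[R]_m) : \bar R :=
  ereal_inf [set hinf_norm A B Bw Qh Rh K | K in Kstab A B].

End Defs.

From HB Require Import structures.
From mathcomp Require Import all_boot all_order all_algebra.
From mathcomp Require Import complex.
From mathcomp Require Import all_classical all_reals all_analysis.
Import Order.TTheory GRing.Theory Num.Theory numFieldTopology.Exports.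
Local Open Scope ring_scope.
Local Open Scope classical_set_scope.

(* Let K be in the closure of K_beta but not in K_beta.  If l is an eigenvalue of
   A_K with Re l > 0, then |det (l - A_K')| >= (Re l)^n for every stabilizing K',
   a bound that passes to the limit and contradicts det (l - A_K) = 0.  If
   (i w - A_K) x = 0 with x <> 0, then v := Bw^-1 (i w - A_K') x tends to 0 as
   K' -> K, whereas T(K')(i w) v = [Qh; Rh K'] x has norm at least |Qh x| > 0;
   for K' in K_beta this contradicts |T(K')(i w) v| <= beta |v|.  So A_K is
   Hurwitz, T(K)(i w) depends continuously on K and ||T(K)|| <= beta; equality
   holds because K is not in K_beta. *)

Set Implicit Arguments. Unset Strict Implicit. Unset Printing Implicit Defensive.

Section entrywise_convergence.
Variables (K : numFieldType) (T : Type) (F : set_system T).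
Context {FF : Filter F}.

Lemma cvg_bigsum (I : Type) (r : seq I) (P : pred I) (f : I -> T -> K) (a : I -> K) :
  (forall i, f i x @[x --> F] --> a i) ->
  (\sum_(i <- r | P i) f i x) @[x --> F] --> \sum_(i <- r | P i) a i.
Proof.
move=> fa; elim: r => [|i r IHr].
  by under eq_fun do rewrite big_nil; rewrite big_nil; exact: cvg_cst.
under eq_fun do rewrite big_cons; rewrite big_cons.
by case: (P i) => //; exact: (cvgD (V := K^o)).
Qed.

Lemma cvg_bigprod (I : Type) (r : seq I) (P : pred I) (f : I -> T -> K) (a : I -> K) :
  (forall i, f i x @[x --> F] --> a i) ->
  (\prod_(i <- r | P i) f i x) @[x --> F] --> \prod_(i <- r | P i) a i.
Proof.
move=> fa; elim: r => [|i r IHr].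
  by under eq_fun do rewrite big_nil; rewrite big_nil; exact: cvg_cst.
under eq_fun do rewrite big_cons; rewrite big_cons.
by case: (P i) => //; exact: cvgM.
Qed.

(* Entrywise convergence: equivalent to convergence for the max norm of
   matrices, but directly compatible with products, determinants and inverses. *)
Definition mxcvg p q (f : T -> 'M[K]_(p, q)) (a : 'M[K]_(p, q)) :=
  forall i j, f x i j @[x --> F] --> a i j.

Lemma mxcvg_cst p q (a : 'M[K]_(p, q)) : mxcvg (fun=> a) a.
Proof. by move=> i j; exact: cvg_cst. Qed.

Lemma mxcvgB p q (f g : T -> 'M[K]_(p, q)) a b :
  mxcvg f a -> mxcvg g b -> mxcvg (fun x => f x - g x) (a - b).
Proof.
move=> fa gb i j; rewrite !mxE; under eq_fun do rewrite !mxE.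
exact: (cvgB (V := K^o)).
Qed.

Lemma mxcvgD p q (f g : T -> 'M[K]_(p, q)) a b :
  mxcvg f a -> mxcvg g b -> mxcvg (fun x => f x + g x) (a + b).
Proof.
move=> fa gb i j; rewrite !mxE; under eq_fun do rewrite !mxE.
exact: (cvgD (V := K^o)).
Qed.

Lemma mxcvgM p q r (f : T -> 'M[K]_(p, q)) (g : T -> 'M[K]_(q, r)) a b :
  mxcvg f a -> mxcvg g b -> mxcvg (fun x => f x *m g x) (a *m b).
Proof.
move=> fa gb i j; rewrite mxE; under eq_fun do rewrite mxE.
by apply: cvg_bigsum => k; exact: cvgM.
Qed.

Lemma mxcvg_col_mx p1 p2 q (f : T -> 'M[K]_(p1, q)) (g : T -> 'M[K]_(p2, q)) a b :
  mxcvg f a -> mxcvg g b -> mxcvg (fun x => col_mx (f x) (g x)) (col_mx a b).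
Proof.
move=> fa gb i j; rewrite mxE; under eq_fun do rewrite mxE.
by case: (fintype.split i) => k; [exact: fa | exact: gb].
Qed.

Lemma mxcvg_det p (f : T -> 'M[K]_p) a :
  mxcvg f a -> \det (f x) @[x --> F] --> \det a.
Proof.
move=> fa; apply: cvg_bigsum => s; apply: cvgM; first exact: cvg_cst.
by apply: cvg_bigprod => i; exact: fa.
Qed.

Lemma mxcvg_adj p (f : T -> 'M[K]_p) a :
  mxcvg f a -> mxcvg (fun x => \adj (f x)) (\adj a).
Proof.
move=> fa i j; rewrite mxE; under eq_fun do rewrite mxE.
apply: cvgM; first exact: cvg_cst.
by apply: mxcvg_det => k l; rewrite !mxE; under eq_fun do rewrite !mxE; exact: fa.
Qed.

Lemma mxcvg_invmx p (f : T -> 'M[K]_p) a :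
  a \in unitmx -> mxcvg f a -> mxcvg (fun x => invmx (f x)) (invmx a).
Proof.
move=> a_unit fa i j.
have det_a_neq0 : \det a != 0 by rewrite -unitfE -unitmxE.
have adj_cvg : ((\det (f x))^-1 * \adj (f x) i j) @[x --> F] --> invmx a i j.
  rewrite /invmx a_unit mxE; apply: cvgM; last exact: mxcvg_adj.
  exact: cvgV (mxcvg_det fa).
apply: cvg_trans adj_cvg; apply: near_eq_cvg.
near=> x; rewrite /invmx unitmxE unitfE ifT ?mxE //.
by near: x; exact: (cvgr_neq0 (V := K^o) _ (mxcvg_det fa) det_a_neq0).
Unshelve. all: by end_near.
Qed.

End entrywise_convergence.

Local Open Scope complex_scope.

Section complex_convergence.
Variable R : realType.
Local Notation C := R[i].
Variables (T : Type) (F : set_system T).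
Context {FF : Filter F}.

Lemma cvg_complex (f : T -> R) (a : R) :
  f x @[x --> F] --> a -> ((f x)%:C : C^o) @[x --> F] --> (a%:C : C^o).
Proof.
move=> fa; apply/(cvgrPdist_lt (V := C^o)) => e e_gt0.
have := e_gt0; rewrite ltcE /= => /andP[/eqP Im_e Re_e_gt0].
near=> x; rewrite -rmorphB /= normc_def ltcE /= Im_e eqxx /= expr0n addr0 sqrtr_sqr.
by near: x; exact: (cvgr_dist_lt (V := R^o) _ _ fa _ Re_e_gt0).
Unshelve. all: by end_near.
Qed.

Lemma cvg_Re (f : T -> C^o) (a : C^o) :
  f x @[x --> F] --> a -> complex.Re (f x) @[x --> F] --> complex.Re a.
Proof.
move=> fa; apply/(cvgrPdist_lt (V := R^o)) => e e_gt0.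
have eC_gt0 : 0 < e%:C :> C by rewrite ltcR.
near=> x; rewrite -ltcR -(raddfB (@complex.Re R : Rcomplex R -> R)).
apply: le_lt_trans (normc_ge_Re _) _.
by near: x; exact: (cvgr_dist_lt (V := C^o) _ _ fa _ eC_gt0).
Unshelve. all: by end_near.
Qed.

Lemma cvg_Im (f : T -> C^o) (a : C^o) :
  f x @[x --> F] --> a -> complex.Im (f x) @[x --> F] --> complex.Im a.
Proof.
move=> fa; rewrite -[complex.Im a]opprK -ReiNIm.
under eq_fun do rewrite -[complex.Im _]opprK -ReiNIm.
apply: (cvgN (V := R^o)); apply: cvg_Re.
exact: cvgM fa (cvg_cst _).
Qed.

Lemma mxcvg_cmx p q (f : T -> 'M[R]_(p, q)) a :
  mxcvg F f a -> mxcvg F (fun x => cmx (f x)) (cmx a).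
Proof.
move=> fa i j; rewrite mxE; under eq_fun do rewrite mxE.
exact: cvg_complex.
Qed.

Lemma cvg_vnorm q (f : T -> 'cV[C]_q) a :
  mxcvg F f a -> vnorm (f x) @[x --> F] --> vnorm a.
Proof.
move=> fa; apply: (continuous_cvg _ (@sqrt_continuous R _)).
apply: cvg_bigsum => i; apply: (cvgD (V := R^o)).
  by apply: cvgM; apply: cvg_Re; exact: fa.
by apply: cvgM; apply: cvg_Im; exact: fa.
Qed.

End complex_convergence.

Lemma mxcvg_id (K : numFieldType) p q (a : 'M[K]_(p, q)) :
  mxcvg (nbhs a) (fun x => x) a.
Proof. by move=> i j; exact: coord_continuous. Qed.

Lemma closure_cvg_le (R : realFieldType) (T : topologicalType) (S : set T)
    (f : T -> R) (t : T) (c : R) :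
  f s @[s --> t] --> f t -> closure S t -> (forall s, S s -> f s <= c) ->
  f t <= c.
Proof.
move=> f_cont clSt f_le; rewrite leNgt; apply/negP => c_lt.
have [s [Ss]] := clSt _ (cvgr_gt _ f_cont _ c_lt).
by apply/negP; rewrite -leNgt f_le.
Qed.

Lemma horner_char_poly (K : comNzRingType) p (M : 'M[K]_p) a :
  (char_poly M).[a] = \det (a%:M - M).
Proof.
apply/esym; rewrite horner_sum; apply: eq_bigr => s _.
rewrite hornerM horner_exp !hornerE; congr (_ * _).
rewrite (big_morph _ (fun p q => hornerM p q a) (hornerC 1 a)).
by apply: eq_bigr => i _; rewrite !mxE !(hornerE, hornerMn).
Qed.

Lemma eigenvalue_det (K : fieldType) p (M : 'M[K]_p) a :
  eigenvalue M a = (\det (a%:M - M) == 0).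
Proof. by rewrite eigenvalue_root_char /root horner_char_poly. Qed.

Lemma eigenvalue_col (K : fieldType) p (M : 'M[K]_p) a :
  eigenvalue M a -> exists2 x : 'cV_p, x != 0 & (a%:M - M) *m x = 0.
Proof.
rewrite eigenvalue_det -det_tr => /det0P[v v_neq0 vM0].
by exists v^T; rewrite ?trmx_eq0 // -[a%:M - M]trmxK -trmx_mul vM0 trmx0.
Qed.

Section vector_norms.
Variable R : realType.
Local Notation C := R[i].

Lemma vnorm_ge0 q (v : 'cV[C]_q) : 0 <= vnorm v.
Proof. exact: sqrtr_ge0. Qed.

Lemma vnorm0 q : vnorm (0 : 'cV[C]_q) = 0.
Proof. by rewrite /vnorm big1 ?sqrtr0 // => i _; rewrite mxE /= expr0n addr0. Qed.

Lemma vnorm_gt0 q (v : 'cV[C]_q) : v != 0 -> 0 < vnorm v.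
Proof.
move=> v_neq0; have [i vi_neq0] : exists i, v i 0 != 0.
  apply/existsP; apply: contraR v_neq0; rewrite negb_exists => /forallP v0.
  by apply/eqP/matrixP => i j; rewrite (ord1 j) mxE; exact/eqP/negPn/v0.
rewrite /vnorm sqrtr_gt0 (bigD1 i) //= ltr_pwDl ?sumr_ge0 // => [|j _].
  by rewrite -ltcR add_Re2_Im2 exprn_gt0 // normr_gt0.
by rewrite addr_ge0 ?sqr_ge0.
Qed.

Lemma vnormZ q (c : R) (v : 'cV[C]_q) : vnorm (c%:C *: v) = `|c| * vnorm v.
Proof.
rewrite /vnorm -sqrtr_sqr -sqrtrM ?sqr_ge0 // mulr_sumr; congr Num.sqrt.
apply: eq_bigr => i _; rewrite mxE.
by case: (v i 0) => a b /=; rewrite !mul0r subr0 addr0 !exprMn mulrDr.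
Qed.

Lemma vnorm_col_mx_ge p q (a : 'cV[C]_p) (b : 'cV[C]_q) :
  vnorm a <= vnorm (col_mx a b).
Proof.
rewrite /vnorm ler_sqrt ?sumr_ge0 // => [|i _]; last by rewrite addr_ge0 ?sqr_ge0.
rewrite big_split_ord /=; under [X in _ <= X + _]eq_bigr do rewrite col_mxEu.
by rewrite lerDl sumr_ge0 // => i _; rewrite col_mxEd addr_ge0 ?sqr_ge0.
Qed.

Lemma vnorm_mulmx_le p q (M : 'M[C]_(p, q)) (r : R) (v : 'cV[C]_q) :
  (opnorm M <= r%:E)%E -> vnorm (M *m v) <= r * vnorm v.
Proof.
move=> M_le; have [->|v_neq0] := eqVneq v 0; first by rewrite mulmx0 !vnorm0 mulr0.
have v_gt0 := vnorm_gt0 v_neq0.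
set u := (vnorm v)^-1%:C *: v.
have u_unit : vnorm u = 1.
  by rewrite vnormZ ger0_norm ?invr_ge0 ?vnorm_ge0 // mulVf ?gt_eqF.
have : ((vnorm (M *m u))%:E <= r%:E)%E.
  by apply: le_trans M_le; apply: ereal_sup_ubound; exists u.
rewrite lee_fin -scalemxAr vnormZ ger0_norm ?invr_ge0 ?vnorm_ge0 //.
by rewrite ler_pdivrMl // mulrC.
Qed.

End vector_norms.

Lemma pd_mulmx_unitmx (R : realType) p (M N : 'M[R]_p) : pd (M *m N) -> M \in unitmx.
Proof.
case=> _ MN_pos; rewrite unitmxE unitfE; apply/negP => /det0P[v v_neq0 vM0].
by have := MN_pos v^T; rewrite trmx_eq0 trmxK mulmxA vM0 !mul0mx mxE ltxx => /(_ v_neq0).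
Qed.

Section hurwitz.
Variables (R : realType) (p : nat).
Local Notation C := R[i].

Lemma hurwitz_unitmx (M : 'M[R]_p) (l : C) :
  hurwitz M -> 0 <= complex.Re l -> l%:M - cmx M \in unitmx.
Proof.
move=> hM Rel_ge0; rewrite unitmxE unitfE; apply/negP => /eqP det0.
by have := hM l; rewrite eigenvalue_det det0 eqxx ltNge Rel_ge0 => /(_ isT).
Qed.

Lemma hurwitz_det_ge (M : 'M[R]_p) (l : C) :
  hurwitz M -> 0 <= complex.Re l ->
  ((complex.Re l) ^+ p)%:C <= `|\det (l%:M - cmx M)|.
Proof.
(* det (l - M) is the product of the l - z over the eigenvalues z of M, and
   |l - z| >= Re l - Re z >= Re l. *)
move=> hM Rel_ge0.
have [r char_r] := closed_field_poly_normal (char_poly (cmx M)).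
rewrite (monicP (char_poly_monic _)) scale1r in char_r.
have size_r : size r = p.
  by have := size_char_poly (cmx M); rewrite char_r size_prod_XsubC => -[].
rewrite -horner_char_poly char_r horner_prod normr_prod rmorphXn /= -size_r.
rewrite -count_predT -iter_mulr_1 -big_const_seq big_seq [leRHS]big_seq.
apply: ler_prod => z z_r; rewrite lecR Rel_ge0 hornerXsubC /=.
have Rez_lt0 : complex.Re z < 0.
  by apply: hM; rewrite eigenvalue_root_char char_r root_prod_XsubC.
apply: le_trans (normc_ge_Re _); rewrite lecR raddfB /=.
by apply: le_trans (ler_norm _); rewrite lerDl oppr_ge0 ltW.
Qed.

Lemma hurwitz_limit_eigenvalue_Re_le0 (T : topologicalType) (S : set T)
    (M : T -> 'M[R]_p) (t : T) (l : C) :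
  mxcvg (nbhs t) M (M t) -> closure S t -> (forall s, S s -> hurwitz (M s)) ->
  eigenvalue (cmx (M t)) l -> complex.Re l <= 0.
Proof.
move=> M_cont clSt hurS; rewrite eigenvalue_det => /eqP det0.
rewrite leNgt; apply/negP => Rel_gt0.
have det_cvg : (\det (l%:M - cmx (M s)) : C^o) @[s --> t] --> (0 : C^o).
  rewrite -det0; apply: mxcvg_det; apply: mxcvgB; first exact: mxcvg_cst.
  exact: mxcvg_cmx.
have bound_gt0 : 0 < ((complex.Re l) ^+ p)%:C :> C by rewrite ltcR exprn_gt0.
have [s [Ss]] := clSt _ (cvgr_dist_lt (V := C^o) _ _ det_cvg _ bound_gt0).
have det_ge := hurwitz_det_ge (hurS s Ss) (ltW Rel_gt0).
by rewrite sub0r normrN => /lt_le_trans/(_ det_ge); rewrite ltxx.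
Qed.

End hurwitz.

Section closed_loop.
Variable R : realType.
Variables (n m : nat) (A : 'M[R]_n) (B : 'M[R]_(n, m)) (Bw Qh : 'M[R]_n)
  (Rh : 'M[R]_m) (beta : R).
Local Notation Kb := (Kbeta A B Bw Qh Rh beta).
Local Notation T := (Tinf A B Bw Qh Rh).

Lemma mxcvg_closed_loop (K : 'M[R]_(m, n)) :
  mxcvg (nbhs K) (fun K' => A + B *m K') (A + B *m K).
Proof.
apply: mxcvgD; first exact: mxcvg_cst.
by apply: mxcvgM; [exact: mxcvg_cst | exact: mxcvg_id].
Qed.

Lemma mxcvg_Tinf K w : Kstab A B K -> mxcvg (nbhs K) (fun K' => T K' w) (T K w).
Proof.
move=> stK; apply: mxcvgM; last exact: mxcvg_cst.
apply: mxcvgM.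
  apply: mxcvg_cmx; apply: mxcvg_col_mx; first exact: mxcvg_cst.
  by apply: mxcvgM; [exact: mxcvg_cst | exact: mxcvg_id].
apply: mxcvg_invmx; first exact: hurwitz_unitmx.
by apply: mxcvgB; [exact: mxcvg_cst | apply: mxcvg_cmx; exact: mxcvg_closed_loop].
Qed.

Lemma Kbeta_Tinf_le K w v : Kb K -> vnorm (T K w *m v) <= beta * vnorm v.
Proof.
case=> _ hinf_lt; apply: vnorm_mulmx_le; apply: le_trans (ltW hinf_lt).
by apply: ereal_sup_ubound; exists w.
Qed.

Lemma closure_Kbeta_no_imaginary_eigenvalue K w :
  Qh \in unitmx -> Bw \in unitmx -> 0 < beta -> closure Kb K ->
  ~ eigenvalue (cmx (A + B *m K)) (Complex 0 w).
Proof.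
move=> Qh_unit Bw_unit beta_gt0 clK /eigenvalue_col[x x_neq0 Nx0].
set l := Complex 0 w in Nx0 *.
have QhC_unit : cmx Qh \in unitmx by rewrite map_unitmx.
have BwC_unit : cmx Bw \in unitmx by rewrite map_unitmx.
set q := vnorm (cmx Qh *m x).
have q_gt0 : 0 < q.
  apply: vnorm_gt0; apply: contra x_neq0 => /eqP Qx0.
  by rewrite -(mulKmx QhC_unit x) Qx0 mulmx0.
pose v K' := invmx (cmx Bw) *m ((l%:M - cmx (A + B *m K')) *m x).
have v_cvg0 : vnorm (v K') @[K' --> K] --> 0.
  rewrite -(@vnorm0 R n) -(mulmx0 1 (invmx (cmx Bw))) -Nx0.
  apply: (cvg_vnorm (F := nbhs K)); apply: mxcvgM; first exact: mxcvg_cst.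
  apply: mxcvgM; last exact: mxcvg_cst.
  by apply: mxcvgB; [exact: mxcvg_cst | apply: mxcvg_cmx; exact: mxcvg_closed_loop].
have [K' [KbK' v_small]] := clK _ (cvgr_lt _ v_cvg0 _ (divr_gt0 q_gt0 beta_gt0)).
have Tv : T K' w *m v K' = cmx (col_mx Qh (Rh *m K')) *m x.
  have [stK' _] := KbK'.
  have N_unit : l%:M - cmx (A + B *m K') \in unitmx by exact: hurwitz_unitmx.
  by rewrite /Tinf /v -!mulmxA (mulKVmx BwC_unit) mulKmx.
have := Kbeta_Tinf_le w (v K') KbK'; rewrite Tv /cmx map_col_mx mul_col_mx.
move=> /(le_trans (vnorm_col_mx_ge _ _)); rewrite -/q.
by move: v_small; rewrite ltr_pdivlMr // mulrC => /lt_le_trans/[apply]; rewrite ltxx.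
Qed.

Lemma closure_Kbeta_hinf_norm_le K : closure Kb K -> Kstab A B K ->
  (hinf_norm A B Bw Qh Rh K <= beta%:E)%E.
Proof.
move=> clK stK; apply: ge_ereal_sup => _ [w _ <-].
apply: ge_ereal_sup => _ [v v_unit <-].
rewrite lee_fin -[beta]mulr1 -v_unit.
apply: (closure_cvg_le (f := fun K' => vnorm (T K' w *m v))) clK _ => [|K' KbK'].
  apply: (cvg_vnorm (F := nbhs K)); apply: mxcvgM; [exact: mxcvg_Tinf | exact: mxcvg_cst].
exact: Kbeta_Tinf_le.
Qed.

End closed_loop.

Unset Implicit Arguments.

Theorem corollary1 (R : realType) (n m : nat)
  (A : 'M[R]_n) (B : 'M[R]_(n, m)) (Bw : 'M[R]_n)
  (Q2 Q2h Qinf Qinfh : 'M[R]_n) (R2 Rinf Rinfh : 'M[R]_m)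
  (beta : R) :
  (* weights and their square roots *)
  psd Q2 -> is_sqrtm Q2h Q2 -> pd R2 ->
  pd Qinf -> is_sqrtm Qinfh Qinf -> pd Rinf -> is_sqrtm Rinfh Rinf ->
  0 < beta ->
  (* Assumption 1 *)
  stabilizable A B -> detectable Q2h A ->
  (beta_star A B Bw Qinfh Rinfh < beta%:E)%E ->
  (* Assumption 2 *)
  pd (Bw *m Bw^T) ->
  closure (Kbeta A B Bw Qinfh Rinfh beta) `\` Kbeta A B Bw Qinfh Rinfh beta
  `<=` [set K | Kstab A B K /\ hinf_norm A B Bw Qinfh Rinfh K = beta%:E].
Proof.
move=> _ _ _ Qinf_pd Qinfh_sqrt _ _ beta_gt0 _ _ _ BwBwT_pd K [clK notKbK].
have Qinfh_unit : Qinfh \in unitmx.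
  by case: Qinfh_sqrt Qinf_pd => _ <-; exact: pd_mulmx_unitmx.
have Bw_unit : Bw \in unitmx := pd_mulmx_unitmx BwBwT_pd.
have stK : Kstab A B K.
  move=> l eig_l; rewrite lt_neqAle; apply/andP; split.
    apply/eqP => Rel0.
    apply: (closure_Kbeta_no_imaginary_eigenvalue (w := complex.Im l)
      Qinfh_unit Bw_unit beta_gt0 clK).
    by case: l Rel0 eig_l => a b /= ->.
  apply: (hurwitz_limit_eigenvalue_Re_le0 (M := fun K' => A + B *m K') _ clK _ eig_l).
    exact: mxcvg_closed_loop.
  by move=> K' [].
split=> //; apply/eqP; rewrite eq_le closure_Kbeta_hinf_norm_le //= leNgt.
by apply/negP => hinf_lt; apply: notKbK.
Qed.
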